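(* For $\theta\in\mathbb{R}$ and $u\in\{0,1\}$ let $$\mathcal{H}^\theta_u=\frac{1}{\sqrt{2}}\begin{bmatrix}1 & 1\\ (-1)^u e^{i\theta} & (-1)^{u+1}e^{i\theta}\end{bmatrix}.$$ Then for all $\theta\in\mathbb{R}$ and all $u,v\in\{0,1\}$, $\mathcal{H}^\theta_u\lvert v\rangle=\mathcal{H}^\theta_v\lvert u\rangle$. Moreover, the one-qubit scheme $\Xi=(\mathcal{QE},\mathcal{QD})$ is correct: for every secret bit $s$, every angle $\theta$ and every message bit $b$, $\mathcal{QD}_{s,\theta}(\mathcal{QE}_{s,\theta}(b))=b$ with probability $1$.
   Context: $\{\lvert 0\rangle,\lvert 1\rangle\}$ is the computational basis. The scheme $\Xi=(\mathcal{QE},\mathcal{QD})$, with secret bit $s\in\{0,1\}$ and equatorial angle $\theta$, is defined as follows. $\mathcal{QE}_{s,\theta}(b)$, for a message bit $b\in\{0,1\}$: prepare $\lvert s\rangle$ and $\lvert b\rangle$, sample a uniformly random bit $r\in\{0,1\}$, and output the pair of qubits $(\lvert c_0\rangle,\lvert c_1\rangle)=(\mathcal{H}^\theta_r\lvert s\rangle,\mathcal{H}^\theta_r\lvert b\rangle)$. $\mathcal{QD}_{s,\theta}(\lvert c_0\rangle,\lvert c_1\rangle)$: apply $(\mathcal{H}^\theta_s)^\dagger$ to $\lvert c_0\rangle$ and measure in the computational basis to obtain a bit $r$; then apply $(\mathcal{H}^\theta_r)^\dagger$ to $\lvert c_1\rangle$, measure in the computational basis to obtain a bit, and output it. *)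

From HB Require Import structures.
From mathcomp Require Import all_boot all_order all_algebra.
From mathcomp Require Import all_classical all_reals.
From mathcomp Require Import trigo.
From mathcomp Require Import complex.
Set Implicit Arguments. Unset Strict Implicit. Unset Printing Implicit Defensive.
Import Order.TTheory GRing.Theory Num.Theory.
Local Open Scope ring_scope.
Local Open Scope complex_scope.

Section QDefs.
Variable R : realType.
Local Notation C := (complex R).

Definition bidx (u : bool) : 'I_2 := inord u.

Definition ket (u : bool) : 'cV[C]_2 := delta_mx (bidx u) 0.

Definition expi (theta : R) : C := (cos theta) +i* (sin theta).

Definition Hmat (theta : R) (u : bool) : 'M[C]_2 :=
  \matrix_(i < 2, j < 2)
    (((Num.sqrt (2 : R))^-1)%:C *
     (if i == 0 :> nat then 1
      else (-1) ^+ (u + j)%N * expi theta)).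

Definition adj (A : 'M[C]_2) : 'M[C]_2 := (map_mx Num.conj A)^T.

(* Born rule: probability of outcome k when measuring the (normalised) qubit
   state psi in the computational basis *)
Definition born (psi : 'cV[C]_2) (k : bool) : R := (Normc.normc (psi (bidx k) 0)) ^+ 2.

(* QE_{s,theta}(b): with probability 1/2 for each r, outputs the product state
   (H_r |s>, H_r |b>).
   QD_{s,theta}: apply (H_s)^dagger to c0, measure -> r'; apply (H_{r'})^dagger to
   c1, measure -> output bit.
   Since the ciphertext is a product state, the measurement on c1 is independent of
   that on c0 given r. *)
Definition QE_state (s theta : _) (b r : bool) : 'cV[C]_2 * 'cV[C]_2 :=
  (Hmat theta r *m ket s, Hmat theta r *m ket b).

Definition QD_prob (s : bool) (theta : R) (c : 'cV[C]_2 * 'cV[C]_2) (b' : bool) : R :=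
  \sum_(r' : bool)
     born (adj (Hmat theta s) *m c.1) r' * born (adj (Hmat theta r') *m c.2) b'.

Definition QDQE_prob (s : bool) (theta : R) (b b' : bool) : R :=
  \sum_(r : bool) (1/2) * QD_prob s theta (QE_state s theta b r) b'.

End QDefs.

From HB Require Import structures.
From mathcomp Require Import all_boot all_order all_algebra.
From mathcomp Require Import all_classical all_reals.
From mathcomp Require Import trigo.
From mathcomp Require Import complex.
From mathcomp Require Import ring lra.
Import Order.TTheory GRing.Theory Num.Theory.
Local Open Scope ring_scope.
Local Open Scope complex_scope.

(** The column [H^θ_u |v>] is [(|0> + (-1)^(u+v) e^{iθ} |1>) / √2]: it depends
   only on [u (+) v], which gives the symmetry, and the two possible columns
   are orthonormal, so [(H^θ_s)^† H^θ_r |v> = |s (+) r (+) v>].  Hence the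
   decryptor's first measurement returns [s (+) r (+) s = r] with certainty,
   and its second one returns [r (+) r (+) b = b]. *)

Section OneQubitScheme.
Variable R : realType.
Local Notation C := (complex R).

Lemma bidxE (k : bool) : nat_of_ord (bidx k) = k.
Proof. by rewrite /bidx inordK //; case: k. Qed.

Lemma bidx_neq0 (i : 'I_2) : bidx (i != ord0) = i.
Proof. by apply: val_inj; rewrite /= bidxE; case: i => -[|[|]]. Qed.

Lemma eq_bidx (k w : bool) : (bidx k == bidx w) = (k == w).
Proof. by apply/eqP/eqP => [/(congr1 val)|->] //=; rewrite !bidxE; case: k; case: w. Qed.

Lemma ketE (w : bool) (i : 'I_2) : ket R w i 0 = (i == bidx w)%:R.
Proof. by rewrite mxE andbT. Qed.

Lemma Hmat_ketE (theta : R) (u v : bool) (i : 'I_2) :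
  (Hmat theta u *m ket R v) i 0 = Hmat theta u i (bidx v).
Proof. by rewrite /ket -colE mxE. Qed.

Lemma Hmat_ket_sym (theta : R) (u v : bool) :
  Hmat theta u *m ket R v = Hmat theta v *m ket R u.
Proof.
apply/matrixP => i j; rewrite (ord1 j) !Hmat_ketE !mxE !bidxE.
by rewrite addnC.
Qed.

Lemma Num_conjE (x : C) : Num.conj x = x^*.
Proof. by []. Qed.

Lemma conjc_expi_mul (theta : R) : (expi theta)^* * expi theta = 1.
Proof.
apply/eqP; rewrite eq_complex /=; apply/andP; split; apply/eqP; last by ring.
by rewrite -(cos2Dsin2 theta); ring.
Qed.

Lemma inv_sqrt2_sqr : ((Num.sqrt (2 : R))^-1)%:C ^+ 2 = 2^-1 :> C.
Proof.
rewrite -rmorphXn /= exprVn sqr_sqrtr ?ler0n //.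
by rewrite rmorphV ?unitfE ?pnatr_eq0 //= rmorph_nat.
Qed.

Lemma adj_Hmat_mul_Hmat_ket (theta : R) (s r v : bool) :
  adj (Hmat theta s) *m (Hmat theta r *m ket R v) = ket R (s (+) r (+) v).
Proof.
apply/matrixP => i j; rewrite (ord1 j) ketE -(bidx_neq0 i).
move: (i != ord0) => k; rewrite !mxE !big_ord_recl big_ord0 !Hmat_ketE !mxE !bidxE /=.
rewrite !rmorphM /= rmorphXn rmorphN1 !Num_conjE !conjc_real.
set c := ((Num.sqrt 2)^-1)%:C.
have -> : c * 1 * (c * 1) +
    (c * ((-1) ^+ (s + k) * (expi theta)^*) * (c * ((-1) ^+ (r + v) * expi theta)) + 0)
  = c ^+ 2 * (1 + (-1) ^+ (s + k) * (-1) ^+ (r + v) * ((expi theta)^* * expi theta))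
  by ring.
rewrite inv_sqrt2_sqr conjc_expi_mul eq_bidx.
have two_neq0 : (2 : C) != 0 by rewrite pnatr_eq0.
by case: s; case: r; case: v; case: k => /=; field.
Qed.

Lemma born_ket (w k : bool) : born (ket R w) k = (k == w)%:R.
Proof.
rewrite /born ketE eq_bidx; case: (k == w).
  by rewrite Normc.normc1 expr1n.
by rewrite Normc.normc0 expr0n.
Qed.

Lemma QD_prob_QE_state (s : bool) (theta : R) (b r b' : bool) :
  QD_prob s theta (QE_state s theta b r) b' = (b' == b)%:R.
Proof.
rewrite /QD_prob /=.
under eq_bigr do rewrite !adj_Hmat_mul_Hmat_ket !born_ket.
by rewrite big_bool /=; case: s; case: r; case: b; case: b' => /=; lra.
Qed.

Lemma QDQE_probE (s : bool) (theta : R) (b b' : bool) :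
  QDQE_prob s theta b b' = (b' == b)%:R.
Proof.
rewrite /QDQE_prob; under eq_bigr do rewrite QD_prob_QE_state.
by rewrite big_bool /=; lra.
Qed.

End OneQubitScheme.

Theorem theorem1 (R : realType) :
  (forall (theta : R) (u v : bool),
      Hmat theta u *m ket R v = Hmat theta v *m ket R u) /\
  (forall (s : bool) (theta : R) (b : bool), QDQE_prob s theta b b = 1).
Proof.
split=> [theta u v | s theta b]; first exact: Hmat_ket_sym.
by rewrite QDQE_probE eqxx; apply: mulr1n.
Qed.
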